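(* Let $G$ be a finitely generated group hyperbolic relative to a finite collection $\mathcal P$, $S$ a finite generating set, and $(\epsilon,R,D)$ thin-triangle constants. Let $\mu$ be a positive integer and $U\subset V\cup W$ a finite subset with $|u,u'|_S\le\mu$ for all $u,u'\in U$. Then for every integer $r\ge\mu$, the $r$-hull $U_r$ is $(\mu+2D)$-convex with respect to every $b\in U$.
   Context: $\Gamma$ is the Cayley graph of $G$ w.r.t. $S$, $V=G$, $W$ the set of cosets $gP_\lambda$; relative hyperbolicity means the coned-off Cayley graph (vertex set $V\cup W$, edges of $\Gamma$ plus edges $(v,w)$ for $v\in w$) is fine and $\delta$-hyperbolic. $|\cdot,\cdot|_S$ is extended to $V\cup W$ via distances in $\Gamma$ between corresponding elements/cosets. For a geodesic edge-path $p=(p_j)_{j=0}^\ell$ in $\Gamma$, $p_i$ is $(\epsilon,R)$-deep in $w\in W$ if $R\le i\le\ell-R$ and $|p_j,w|_S\le\epsilon$ for all $|j-i|\le R$. A geodesic from $a$ to $b$ ($a,b\in V\cup W$) is a geodesic in $\Gamma$ of length $|a,b|_S$ starting at $a$ (if $a\in V$) or in $a$ (if $a\in W$), ending analogously at $b$; for $i>\ell$, $p_i:=p_\ell$. Positive integers $(\epsilon,R,D)$ are thin-triangle constants if: $D\ge\epsilon$; no vertex of a geodesic in $\Gamma$ is $(\epsilon,R)$-deep in two distinct cosets; and for all $a,b,c\in V\cup W$ with $a\ne b$, geodesics $p^{ab},p^{bc},p^{ac}$, $\ell=|a,b|_S$, $0\le i\le\ell$, with $z=w$ if $p^{ab}_i$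 is $(\epsilon,R)$-deep in $w$ and $z=p^{ab}_i$ otherwise, we have $|z,p^{ac}_i|_S\le D$ or $|z,p^{bc}_{\ell-i}|_S\le D$. The $r$-hull $U_r$ of finite $U$ is the union of all $v\in V$ with $|v,u|_S\le r$ for every $u\in U$ and all $w\in W$ with $|w,u|_S\le r+\epsilon$ for every $u\in U$. A subset $U'\subset V\cup W$ is $\nu$-convex with respect to $u\in U'$ if for every $u'\in U'$, every geodesic $(p_j)_{j=0}^\ell$ from $u$ to $u'$ in $\Gamma$ and every $j\le\ell-\nu$: $p_j\in U'$, and every $w\in W$ with $|w,p_j|_S\le\epsilon$ lies in $U'$. *)

From Stdlib Require Import List Arith.
Import ListNotations.

Record Grp := {
  gcar :> Type;
  gmul : gcar -> gcar -> gcar;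
  gone : gcar;
  ginv : gcar -> gcar;
  gassoc : forall x y z, gmul x (gmul y z) = gmul (gmul x y) z;
  gmul1 : forall x, gmul gone x = x;
  gmulV : forall x, gmul (ginv x) x = gone }.

(** Walks in a graph with adjacency relation E: [walk E x l y] means
    x, l_1, ..., l_k is a walk ending at y = l_k (or y = x if l = []);
    it has [length l] edges. *)
Fixpoint walk {X : Type} (E : X -> X -> Prop) (x : X) (l : list X) (y : X) : Prop :=
  match l with
  | [] => x = y
  | z :: l' => E x z /\ walk E z l' y
  end.

Definition gdist_le {X : Type} (E : X -> X -> Prop) (x y : X) (n : nat) : Prop :=
  exists l, walk E x l y /\ length l <= n.

Section RelHyp.
Context {G : Grp} (gens : list G) {Lam : Type} {P : Lam -> G -> Prop}.

Definition generates : Prop :=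
  forall g : G, exists l : list (G * bool),
    (forall x b, In (x, b) l -> In x gens) /\
    g = fold_right (fun (xb : G * bool) (acc : G) => gmul G (if snd xb then fst xb else ginv G (fst xb)) acc)
                   (gone G) l.

Definition is_subgroup (H : G -> Prop) : Prop :=
  H (gone G) /\ (forall x y, H x -> H y -> H (gmul G x y)) /\ (forall x, H x -> H (ginv G x)).

Definition adjG (x y : G) : Prop :=
  exists s, In s gens /\ (y = gmul G x s \/ x = gmul G y s).

(** Cosets g P_lambda, recorded together with their index lambda. *)
Definition isCoset (c : Lam * (G -> Prop)) : Prop :=
  exists g : G, forall x, snd c x <-> P (fst c) (gmul G (ginv G g) x).

Definition W : Type := { c : Lam * (G -> Prop) | isCoset c }.

Definition X : Type := (G + W)%type.

Definition inX (a : X) (x : G) : Prop :=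
  match a with
  | inl v => x = v
  | inr w => snd (proj1_sig w) x
  end.

Definition distS_le (a b : X) (n : nat) : Prop :=
  exists x y, inX a x /\ inX b y /\ gdist_le adjG x y n.

Definition distS_eq (a b : X) (n : nat) : Prop :=
  distS_le a b n /\ forall m, distS_le a b m -> n <= m.

(** A geodesic edge path (p_j)_{j=0}^l in Gamma, extended by p_i := p_l for i > l. *)
Definition geod (l : nat) (p : nat -> G) : Prop :=
  (forall j, j < l -> adjG (p j) (p (Datatypes.S j))) /\
  (forall m, gdist_le adjG (p 0) (p l) m -> l <= m) /\
  (forall i, l <= i -> p i = p l).

Definition geod_from (a b : X) (l : nat) (p : nat -> G) : Prop :=
  geod l p /\ inX a (p 0) /\ inX b (p l) /\ distS_eq a b l.

Definition deep (eps R l : nat) (p : nat -> G) (i : nat) (w : W) : Prop :=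
  R <= i /\ i + R <= l /\
  forall j, j <= i + R -> i <= j + R -> distS_le (inr w) (inl (p j)) eps.

Definition z_of (eps R l : nat) (p : nat -> G) (i : nat) (z : X) : Prop :=
  (exists w, deep eps R l p i w /\ z = inr w) \/
  ((forall w, ~ deep eps R l p i w) /\ z = inl (p i)).

Definition thin_triangle_constants (eps R D : nat) : Prop :=
  0 < eps /\ 0 < R /\ 0 < D /\ eps <= D /\
  (forall l p, geod l p -> forall i w w',
      deep eps R l p i w -> deep eps R l p i w' -> w = w') /\
  (forall a b c : X, a <> b ->
     forall lab pab lbc pbc lac pac,
       geod_from a b lab pab -> geod_from b c lbc pbc -> geod_from a c lac pac ->
       forall i, i <= lab ->
       forall z : X, z_of eps R lab pab i z ->
         distS_le z (inl (pac i)) D \/ distS_le z (inl (pbc (lab - i))) D).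

Definition adjC (a b : X) : Prop :=
  match a, b with
  | inl x, inl y => adjG x y
  | inl x, inr w => inX (inr w) x
  | inr w, inl x => inX (inr w) x
  | inr _, inr _ => False
  end.

Definition circuit (c : list X) : Prop :=
  3 <= length c /\ NoDup c /\
  match c with
  | [] => False
  | x0 :: rest => walk adjC x0 (rest ++ [x0]) x0
  end.

(** fine: every edge lies in finitely many circuits of each length
    (circuits through the edge {x,y} normalised to start with x, y) *)
Definition fine : Prop :=
  forall x y, adjC x y -> forall n : nat,
    exists L : list (list X), forall c, circuit c -> length c = n ->
      (exists rest, c = x :: y :: rest) -> In c L.

Definition geodC (a : X) (l : list X) (b : X) : Prop :=
  walk adjC a l b /\ forall m, gdist_le adjC a b m -> length l <= m.

Definition hyperbolic (delta : nat) : Prop :=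
  forall a b c p q r, geodC a p b -> geodC b q c -> geodC a r c ->
    forall x, In x (a :: p) ->
      exists y, (In y (b :: q) \/ In y (a :: r)) /\ gdist_le adjC x y delta.

Definition rel_hyp : Prop :=
  generates /\ (forall lam, is_subgroup (P lam)) /\
  (exists lst : list Lam, forall lam, In lam lst) /\
  fine /\ exists delta, hyperbolic delta.

Definition hull (eps : nat) (U : list X) (r : nat) (a : X) : Prop :=
  match a with
  | inl v => forall u, In u U -> distS_le (inl v) u r
  | inr w => forall u, In u U -> distS_le (inr w) u (r + eps)
  end.

Definition convex (eps : nat) (U' : X -> Prop) (nu : nat) (u : X) : Prop :=
  forall u', U' u' -> forall l p, geod_from u u' l p ->
    forall j, j + nu <= l ->
      U' (inl (p j)) /\ (forall w : W, distS_le (inr w) (inl (p j)) eps -> U' (inr w)).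

End RelHyp.

(** A geodesic [p] from [b] to a point [u'] of the hull has length [l <= r + eps].
    Thin triangles for [b, u', u] at the index [0] put [p 0] within [D] either of
    the start of a geodesic from [b] to [u] (so [|p 0, u| <= D + mu]) or of the
    point at index [l] of a geodesic from [u'] to [u] (so [|p 0, u| <= D + r + eps - l]).
    Walking [j] steps along [p], with [j + mu + 2D <= l] and [eps <= D], keeps
    [|p j, u| <= r]; cosets within [eps] of [p j] are then within [r + eps] of [U]. *)

From Stdlib Require Import List Arith Lia Classical Wf_nat.
Import ListNotations.

Section Walks.
Context {T : Type} (E : T -> T -> Prop).

Lemma walk_app x l1 y l2 z : walk E x l1 y -> walk E y l2 z -> walk E x (l1 ++ l2) z.
Proof.
  revert x; induction l1 as [|a l1 IH]; simpl; intros x H1 H2.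
  - now subst.
  - destruct H1 as [Hxa Ha]; split; [exact Hxa | exact (IH a Ha H2)].
Qed.

Lemma gdist_le_refl x : gdist_le E x x 0.
Proof. now exists []. Qed.

Lemma gdist_le_edge x y : E x y -> gdist_le E x y 1.
Proof. intros Hxy; exists [y]; simpl; auto. Qed.

Lemma gdist_le_weaken x y m n : gdist_le E x y m -> m <= n -> gdist_le E x y n.
Proof. intros [l [Hw Hl]] Hmn; exists l; split; [exact Hw | lia]. Qed.

Lemma gdist_le_trans x y z m n :
  gdist_le E x y m -> gdist_le E y z n -> gdist_le E x z (m + n).
Proof.
  intros [l1 [H1 L1]] [l2 [H2 L2]]; exists (l1 ++ l2); split.
  - exact (walk_app _ _ _ _ _ H1 H2).
  - rewrite length_app; lia.
Qed.

Lemma gdist_le_sym (Esym : forall x y, E x y -> E y x) x y n :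
  gdist_le E x y n -> gdist_le E y x n.
Proof.
  intros [l [Hw Hl]]; apply (gdist_le_weaken _ _ (length l)); [clear Hl | exact Hl].
  revert x Hw; induction l as [|z l IH]; simpl; intros x Hw.
  - subst; apply gdist_le_refl.
  - destruct Hw as [Hxz Hw]; rewrite <- Nat.add_1_r.
    exact (gdist_le_trans _ _ _ _ _ (IH z Hw) (gdist_le_edge _ _ (Esym _ _ Hxz))).
Qed.

Lemma path_gdist_le (l : nat) (p : nat -> T) :
  (forall j, j < l -> E (p j) (p (S j))) -> (forall i, l <= i -> p i = p l) ->
  forall i k, i <= k -> gdist_le E (p i) (p k) (k - i).
Proof.
  intros Hadj Hconst i k Hik; induction Hik as [|k Hik IH].
  - rewrite Nat.sub_diag; apply gdist_le_refl.
  - destruct (Nat.lt_ge_cases k l) as [Hkl | Hlk].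
    + replace (S k - i) with (k - i + 1) by lia.
      exact (gdist_le_trans _ _ _ _ _ IH (gdist_le_edge _ _ (Hadj k Hkl))).
    + rewrite (Hconst (S k)), <- (Hconst k Hlk) by lia.
      apply (gdist_le_weaken _ _ _ _ IH); lia.
Qed.

Lemma walk_nth_adj x l y :
  walk E x l y -> forall j, j < length l -> E (nth j (x :: l) y) (nth (S j) (x :: l) y).
Proof.
  revert x; induction l as [|z l IH]; simpl; intros x Hw j Hj; [lia |].
  destruct Hw as [Hxz Hw]; destruct j as [|j]; simpl; [now destruct l | apply (IH z Hw j); lia].
Qed.

Lemma walk_nth_length x l y : walk E x l y -> nth (length l) (x :: l) y = y.
Proof.
  revert x; induction l as [|z l IH]; simpl; intros x Hw; [easy | exact (IH z (proj2 Hw))].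
Qed.

End Walks.

Section CayleyGraph.
Context {G : Grp} (gens : list G) {Lam : Type} {P : Lam -> G -> Prop}.

Local Notation XP := (@X G Lam P).
Local Notation dist_le := (@distS_le G gens Lam P).

Lemma adjG_sym x y : adjG gens x y -> adjG gens y x.
Proof. intros [s [Hs [H | H]]]; exists s; auto. Qed.

Lemma distS_le_weaken (a b : XP) m n : dist_le a b m -> m <= n -> dist_le a b n.
Proof.
  intros (x & y & Hx & Hy & Hd) Hmn; exists x, y; split; [exact Hx | split; [exact Hy |]].
  exact (gdist_le_weaken _ _ _ _ _ Hd Hmn).
Qed.

Lemma distS_le_sym (a b : XP) n : dist_le a b n -> dist_le b a n.
Proof.
  intros (x & y & Hx & Hy & Hd); exists y, x; split; [exact Hy | split; [exact Hx |]].
  exact (gdist_le_sym _ adjG_sym _ _ _ Hd).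
Qed.

(** The triangle inequality holds through a vertex, not through a coset. *)
Lemma distS_le_trans (a c : XP) x m n :
  dist_le a (inl x) m -> dist_le (inl x) c n -> dist_le a c (m + n).
Proof.
  intros (x1 & y1 & Ha & Hy1 & H1) (x2 & y2 & Hx2 & Hc & H2); simpl in Hy1, Hx2; subst.
  exists x1, y2; split; [exact Ha | split; [exact Hc |]].
  exact (gdist_le_trans _ _ _ _ _ _ H1 H2).
Qed.

Lemma geod_gdist_le l p i k : geod gens l p -> i <= k -> gdist_le (adjG gens) (p i) (p k) (k - i).
Proof. intros (Hadj & _ & Hconst); exact (path_gdist_le _ l p Hadj Hconst i k). Qed.

Lemma geod_gdist_le_end l p i : geod gens l p -> gdist_le (adjG gens) (p i) (p l) (l - i).
Proof.
  intros Hp; destruct (Nat.le_gt_cases i l) as [Hil | Hli].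
  - exact (geod_gdist_le _ _ _ _ Hp Hil).
  - destruct Hp as (_ & _ & Hconst); rewrite (Hconst i) by lia; replace (l - i) with 0 by lia; apply gdist_le_refl.
Qed.

Lemma geod_from_length_le (a b : XP) l p n : geod_from gens a b l p -> dist_le a b n -> l <= n.
Proof. intros (_ & _ & _ & _ & Hmin); exact (Hmin n). Qed.

Lemma geod_from_self_length (a : XP) l p : geod_from gens a a l p -> l = 0.
Proof.
  intros Hp; enough (l <= 0) by lia; apply (geod_from_length_le _ _ _ _ _ Hp).
  destruct Hp as (_ & Ha & _); exists (p 0), (p 0); repeat split; [exact Ha | exact Ha |].
  apply gdist_le_refl.
Qed.

Lemma geod_from_distS_le_end (a c : XP) l p m i :
  geod_from gens a c l p -> dist_le a c m -> dist_le (inl (p i)) c (m - i).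
Proof.
  intros Hp Hm; pose proof (geod_from_length_le _ _ _ _ _ Hp Hm) as Hlm.
  destruct Hp as (Hg & _ & Hc & _).
  exists (p i), (p l); split; [reflexivity | split; [exact Hc |]].
  apply (gdist_le_weaken _ _ _ _ _ (geod_gdist_le_end _ _ i Hg)); lia.
Qed.

Lemma geod_from_exists (a c : XP) n : dist_le a c n -> exists l p, geod_from gens a c l p.
Proof.
  intros Hn.
  destruct (dec_inh_nat_subset_has_unique_least_element (dist_le a c)
              (fun k => classic _) (ex_intro _ n Hn)) as (m & (Hm & Hmin) & _).
  destruct Hm as (x & y & Hx & Hy & w & Hw & Hlen).
  exists (length w), (fun i => nth i (x :: w) y); repeat split.
  - exact (walk_nth_adj _ _ _ _ Hw).
  - intros k Hk; rewrite (walk_nth_length _ _ _ _ Hw) in Hk.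
    enough (m <= k) by lia; apply Hmin; now exists x, y.
  - intros i Hi; rewrite (walk_nth_length _ _ _ _ Hw).
    destruct (Nat.eq_dec i (length w)) as [-> | Hne];
      [exact (walk_nth_length _ _ _ _ Hw) | apply nth_overflow; simpl; lia].
  - exact Hx.
  - rewrite (walk_nth_length _ _ _ _ Hw); exact Hy.
  - exists x, y; repeat split; auto; now exists w.
  - intros k Hk; specialize (Hmin k Hk); lia.
Qed.

Lemma z_of_start eps R l p : 0 < R -> @z_of G gens Lam P eps R l p 0 (inl (p 0)).
Proof. intros HR; right; split; [intros w [H0 _]; lia | reflexivity]. Qed.

Lemma geod_from_start_close eps R D (HT : @thin_triangle_constants G gens Lam P eps R D)
    (a b c : XP) l p m n :
  geod_from gens a b l p -> a <> b -> dist_le a c m -> dist_le b c n ->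
  dist_le (inl (p 0)) c (D + Nat.max m (n - l)).
Proof.
  intros Hp Hab Hm Hn; destruct HT as (_ & HR & _ & _ & _ & Hthin).
  destruct (geod_from_exists _ _ _ Hm) as (lac & pac & Hac).
  destruct (geod_from_exists _ _ _ Hn) as (lbc & pbc & Hbc).
  destruct (Hthin a b c Hab l p lbc pbc lac pac Hp Hbc Hac 0 (Nat.le_0_l _) _
              (z_of_start eps R l p HR)) as [Hclose | Hclose];
    [ pose proof (geod_from_distS_le_end _ _ _ _ _ 0 Hac Hm) as Hend
    | rewrite Nat.sub_0_r in Hclose;
      pose proof (geod_from_distS_le_end _ _ _ _ _ l Hbc Hn) as Hend ];
    apply (distS_le_weaken _ _ _ _ (distS_le_trans _ _ _ _ _ Hclose Hend)); lia.
Qed.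

Lemma hull_distS_le eps U r (a u : XP) :
  @hull G gens Lam P eps U r a -> In u U -> dist_le a u (r + eps).
Proof.
  destruct a as [v | w]; simpl; intros Ha Hu; [| exact (Ha u Hu)].
  apply (distS_le_weaken _ _ _ _ (Ha u Hu)); lia.
Qed.

End CayleyGraph.

Theorem lemma3p10 (G : Grp) (S : list G) (Lam : Type) (P : Lam -> G -> Prop)
  (Hrh : @rel_hyp G S Lam P)
  (eps R D : nat) (HT : @thin_triangle_constants G S Lam P eps R D)
  (mu : nat) (Hmu : 0 < mu) (U : list (@X G Lam P))
  (HU : forall u u', In u U -> In u' U -> @distS_le G S Lam P u u' mu) :
  forall r : nat, mu <= r ->
  forall b, In b U ->
    @convex G S Lam P eps (@hull G S Lam P eps U r) (mu + 2 * D) b.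
Proof.
  intros r Hr b Hb u' Hu' l p Hp j Hj.
  assert (HepsD : eps <= D) by apply HT.
  assert (Hvertex : forall u, In u U -> @distS_le G S Lam P (inl (p j)) u r).
  { intros u Hu.
    assert (Hl : l <= r + eps).
    { apply (geod_from_length_le _ _ _ _ _ _ Hp), distS_le_sym, (hull_distS_le _ _ _ _ _ _ Hu' Hb). }
    assert (Hbu' : b <> u').
    { intros <-; pose proof (geod_from_self_length _ _ _ _ Hp); lia. }
    pose proof (geod_from_start_close _ _ _ _ HT _ _ _ _ _ _ _ Hp Hbu' (HU b u Hb Hu)
                  (hull_distS_le _ _ _ _ _ _ Hu' Hu)) as Hstart.
    assert (Hpj : @distS_le G S Lam P (inl (p j)) (inl (p 0)) j).
    { exists (p j), (p 0); repeat split.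
      apply (gdist_le_sym _ (adjG_sym S)).
      pose proof (geod_gdist_le _ _ _ _ _ (proj1 Hp) (Nat.le_0_l j)) as H0j.
      now rewrite Nat.sub_0_r in H0j. }
    apply (distS_le_weaken _ _ _ _ _ (distS_le_trans _ _ _ _ _ _ Hpj Hstart)); lia. }
  split; [exact Hvertex |].
  intros w Hw u Hu.
  apply (distS_le_weaken _ _ _ _ _ (distS_le_trans _ _ _ _ _ _ Hw (Hvertex u Hu))); lia.
Qed.
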